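(* If $X$ is a locally compact Hausdorff space that is not pseudocompact, then $X$ contains a regular closed, $\sigma$-compact, non-pseudocompact subset.
   Context: A space is pseudocompact if every continuous real-valued function on it is bounded. A subset is regular closed if it equals the closure of its interior. *)

From HB Require Import structures.
From mathcomp Require Import all_boot all_order all_algebra.
From mathcomp Require Import all_classical all_reals all_analysis.
Set Implicit Arguments. Unset Strict Implicit. Unset Printing Implicit Defensive.
Import Order.TTheory GRing.Theory Num.Theory numFieldTopology.Exports numFieldNormedType.Exports.
Local Open Scope classical_set_scope.
Local Open Scope ring_scope.

Definition pseudocompact_space (R : realType) (X : topologicalType) : Prop :=
  forall f : X -> R, continuous f -> exists M : R, forall x : X, `|f x| <= M.

Definition pseudocompact_set (R : realType) (X : topologicalType) (A : set X) : Prop :=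
  forall f : X -> R, {within A, continuous f} ->
    exists M : R, forall x : X, A x -> `|f x| <= M.

Definition regular_closed (X : topologicalType) (A : set X) : Prop :=
  A = closure (interior A).

Definition sigma_compact (X : topologicalType) (A : set X) : Prop :=
  exists K : nat -> set X, (forall n, compact (K n)) /\ A = \bigcup_n K n.

From mathcomp Require Import all_boot all_order all_algebra.
From mathcomp Require Import all_classical all_reals all_analysis.
From mathcomp Require Import lra.
Set Implicit Arguments. Unset Strict Implicit. Unset Printing Implicit Defensive.
Import Order.TTheory GRing.Theory Num.Theory numFieldTopology.Exports numFieldNormedType.Exports.
Local Open Scope classical_set_scope.
Local Open Scope ring_scope.

(* Take a continuous g >= 0 that is unbounded, and points x_n with
   g(x_{n+1}) > g(x_n) + 2.  Around each x_n choose an open set U_n inside a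
   compact neighbourhood of x_n on which g stays within 1/2 of g(x_n).  The
   closures of the U_n are compact and lie in pairwise far apart level bands
   of g, so their union A is locally finite, hence closed; being a union of
   closures of open sets it is regular closed, and g is unbounded on A. *)

Lemma not_pseudocompact_unbounded (R : realType) (X : topologicalType) :
  ~ pseudocompact_space R X ->
  exists2 g : X -> R, continuous g & forall M, exists x, M < g x.
Proof.
move=> npc; apply: contrapT => nog; apply: npc => f f_cont.
apply: contrapT => f_unbounded; apply: nog.
exists (fun x => `|f x|); first by move=> x; exact: cvg_norm (f_cont x).
move=> M; apply: contrapT => noM; apply: f_unbounded; exists M => x.
by rewrite leNgt; apply/negP => Mx; apply: noM; exists x.
Qed.

Lemma unbounded_spaced_seq (R : realDomainType) (T : Type) (g : T -> R) :
  (forall M, exists x, M < g x) ->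
  exists x_ : nat -> T, forall n, g (x_ n) + 2 < g (x_ n.+1).
Proof.
move=> /choice[above aboveP].
by exists (fun n => iter n (fun y => above (g y + 2)) (above 0)) => n.
Qed.

Section spaced_sequences.
Variables (R : realDomainType) (a : nat -> R).
Hypothesis a_spaced : forall n, a n + 2 < a n.+1.

Lemma spaced_seq_le n m : (n < m)%N -> a n + 2 <= a m.
Proof.
elim: m => // m IH; rewrite ltnS leq_eqVlt => /orP[/eqP-> | /IH le_nm].
  exact/ltW/a_spaced.
by have := a_spaced m; lra.
Qed.

Lemma spaced_seq_inj n m : `|a n - a m| < 2 -> n = m.
Proof.
rewrite ltr_norml => /andP[lt_mn lt_nm].
by case: (ssrnat.ltngtP n m) => [/spaced_seq_le | /spaced_seq_le |] // ?;
  exfalso; lra.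
Qed.

Lemma spaced_seq_ge n : a 0 + n%:R <= a n.
Proof. by elim: n => [|n IH]; rewrite ?addr0 // -natr1; have := a_spaced n; lra. Qed.

End spaced_sequences.

Lemma spaced_seq_unbounded (R : archiRealFieldType) (a : nat -> R) :
  (forall n, a n + 2 < a n.+1) -> forall M, exists n, M < a n.
Proof.
move=> a_spaced M; have := archi_boundP (normr_ge0 (M - a 0)).
set n := Num.Def.archi_bound _ => lt_Mn; exists n.
have := spaced_seq_ge a_spaced n; have := ler_norm (M - a 0); lra.
Qed.

Lemma locally_compact_closed_nbhs (X : topologicalType) :
  locally_compact [set: X] ->
  forall x : X, exists C, [/\ nbhs x C, compact C & closed C].
Proof.
by move=> lcX x; have [C] := lcX x I; rewrite withinET => Cx [cC clC]; exists C.
Qed.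

Lemma closed_bigcup_locally_single (T : topologicalType) (I : Type)
    (K : I -> set T) :
  (forall i, closed (K i)) ->
  (forall x : T, exists2 W, nbhs x W &
     forall i j y z, W y -> W z -> K i y -> K j z -> i = j) ->
  closed (\bigcup_i K i).
Proof.
move=> K_closed single x clx; have [W Wx W_single] := single x.
have [y [[i _ Kiy] Wy]] := clx _ Wx.
exists i => //; apply: K_closed => B Bx.
have [z [[j _ Kjz] [Bz Wz]]] := clx _ (filterI Bx Wx).
by rewrite (W_single _ _ _ _ Wy Wz Kiy Kjz); exists z.
Qed.

Lemma regular_closed_bigcup_closure (T : topologicalType) (I : Type)
    (U : I -> set T) :
  (forall i, open (U i)) -> closed (\bigcup_i closure (U i)) ->
  regular_closed (\bigcup_i closure (U i)).
Proof.
move=> U_open A_closed; apply/seteqP; split.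
  move=> x [i _ Uix]; apply: (closureS _ Uix).
  by rewrite -open_subsetE // => y Uiy; exists i => //; exact: subset_closure.
by move=> x /(closureS (@interior_subset _ _)); exact: A_closed.
Qed.

Section level_neighbourhoods.
Variables (R : realType) (X : topologicalType) (g : X -> R).
Variables (x_ : nat -> X) (C : X -> set X).
Hypothesis g_cont : continuous g.
Hypothesis g_spaced : forall n, g (x_ n) + 2 < g (x_ n.+1).
Hypothesis C_nbhs : forall x, nbhs x (C x).
Hypothesis C_closed : forall x, closed (C x).

Definition level_nbhd n :=
  interior (C (x_ n) `&` [set y | `|g (x_ n) - g y| < 1/2]).

Lemma level_nbhd_center n : level_nbhd n (x_ n).
Proof.
apply: filterI; first exact: C_nbhs.
have half_gt0 : (0 : R) < 1/2 by lra.
exact: (cvgr_dist_lt _ _ (@g_cont (x_ n)) _ half_gt0).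
Qed.

Lemma closure_level_nbhd_sub n :
  closure (level_nbhd n) `<=` C (x_ n) `&` [set y | `|g (x_ n) - g y| <= 1/2].
Proof.
have band_closed :
    closed ((fun y => `|g (x_ n) - g y|) @^-1` [set r | r <= 1/2]).
  apply: preimage_closed; last exact: closed_le.
  by move=> y _; apply: cvg_norm; apply: cvgB; [exact: cvg_cst | exact: @g_cont].
move=> x /(closureS (@interior_subset _ _)) clx.
by split; [apply: C_closed | apply: band_closed]; apply: (closureS _ clx) => y [] // _ /ltW.
Qed.

Lemma closed_bigcup_closure_level_nbhd :
  closed (\bigcup_n closure (level_nbhd n)).
Proof.
apply: closed_bigcup_locally_single => [n|x]; first exact: closed_closure.
have half_gt0 : (0 : R) < 1/2 by lra.
exists [set y | `|g x - g y| < 1/2].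
  exact: (cvgr_dist_lt _ _ (@g_cont x) _ half_gt0).
move=> i j y z /= gy gz /closure_level_nbhd_sub[_ /= iy].
move=> /closure_level_nbhd_sub[_ /= jz]; apply: (spaced_seq_inj g_spaced).
move: gy gz iy jz; rewrite !ltr_norml !ler_norml.
by move=> /andP[? ?] /andP[? ?] /andP[? ?] /andP[? ?]; lra.
Qed.

End level_neighbourhoods.

Theorem lemma3p3 (R : realType) (X : topologicalType) :
  hausdorff_space X -> locally_compact [set: X] ->
  ~ pseudocompact_space R X ->
  exists A : set X, [/\ regular_closed A, sigma_compact A & ~ pseudocompact_set R A].
Proof.
move=> _ lcX /not_pseudocompact_unbounded[g g_cont g_unbounded].
have [x_ g_spaced] := unbounded_spaced_seq g_unbounded.
have [C /all_and3[C_nbhs C_compact C_closed]] :=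
  choice (locally_compact_closed_nbhs lcX).
have A_closed := closed_bigcup_closure_level_nbhd g_cont g_spaced C_closed.
set K := fun n => closure _ in A_closed.
exists (\bigcup_n K n); split.
- by apply: regular_closed_bigcup_closure A_closed => n; exact: open_interior.
- exists K; split => // n; apply: (subclosed_compact _ (C_compact (x_ n))).
    exact: closed_closure.
  by move=> y /(closure_level_nbhd_sub g_cont C_closed)[].
- move=> /(_ g (continuous_subspaceT g_cont))[M gM].
  have [n Mn] := spaced_seq_unbounded g_spaced M.
  have x_n_in_A : (\bigcup_n K n) (x_ n).
    by exists n => //; exact/subset_closure/level_nbhd_center.
  have := gM _ x_n_in_A; have := ler_norm (g (x_ n)); lra.
Qed.
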